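(* Let $s\ge2$ and let $\mathbb{R}^{2s}$ have basis $\{U_1,\dots,U_s,T_1,\dots,T_s\}$. Let $B_{2,s}$ be the algebraic curvature tensor on $\mathbb{R}^{2s}$ with $B_{2,s}(U_i,U_j,U_k,T_l)=\delta_{il}\delta_{jk}-\delta_{ik}\delta_{jl}$ and all components on basis vectors not obtained from these via the symmetries $B(x,y,z,w)=-B(y,x,z,w)=B(z,w,x,y)$ equal to zero. Then: (1) If $\xi_1,\xi_2\in\mathbb{R}^{2s}$ are non-zero and $B_{2,s}(\xi_1,\xi_2,\eta_1,\eta_2)=0$ and $B_{2,s}(\xi_1,\eta_1,\eta_2,\xi_2)=0$ for all $\eta_1,\eta_2\in\mathbb{R}^{2s}$, then $\xi_1,\xi_2\in\operatorname{Span}\{T_1,\dots,T_s\}$. (2) $(\mathbb{R}^{2s},B_{2,s})$ is irreducible: there is no decomposition $\mathbb{R}^{2s}=W_1\oplus W_2$ with $W_1,W_2\ne0$ such that $B_{2,s}(x_1,x_2,x_3,x_4)=0$ whenever some argument lies in $W_1$ and another lies in $W_2$.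
   Context: An algebraic curvature tensor is a $4$-tensor $A$ with $A(x,y,z,w)=-A(y,x,z,w)=A(z,w,x,y)$ and $A(x,y,z,w)+A(y,z,x,w)+A(z,x,y,w)=0$. *)

From HB Require Import structures.
From mathcomp Require Import all_boot all_order all_algebra.
From mathcomp Require Import reals.
Set Implicit Arguments. Unset Strict Implicit. Unset Printing Implicit Defensive.
Import Order.TTheory GRing.Theory Num.Theory.
Local Open Scope ring_scope.

(* R^{2s} is modelled as row vectors 'rV[R]_(s + s); index lshift s i is U_(i+1),
   index rshift s l is T_(l+1). *)

Definition Ubas (R : realType) (s : nat) (i : 'I_s) : 'rV[R]_(s + s) :=
  delta_mx 0 (lshift s i).
Definition Tbas (R : realType) (s : nat) (l : 'I_s) : 'rV[R]_(s + s) :=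
  delta_mx 0 (rshift s l).

Definition Bfun (R : realType) (s : nat) (i j k l : 'I_s) : R :=
  (i == l)%:R * (j == k)%:R - (i == k)%:R * (j == l)%:R.

(* components of B_{2,s} on basis vectors: B(U_i,U_j,U_k,T_l) and the
   components obtained from it via B(x,y,z,w) = -B(y,x,z,w) = B(z,w,x,y);
   all other components vanish. *)
Definition Bcomp (R : realType) (s : nat) (a b c d : 'I_(s + s)) : R :=
  match split a, split b, split c, split d with
  | inl i, inl j, inl k, inr l => Bfun R i j k l
  | inl i, inl j, inr l, inl k => - Bfun R i j k l
  | inl k, inr l, inl i, inl j => Bfun R i j k l
  | inr l, inl k, inl i, inl j => - Bfun R i j k l
  | _, _, _, _ => 0
  end.

Definition B2s (R : realType) (s : nat) (x y z w : 'rV[R]_(s + s)) : R :=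
  \sum_(a < s + s) \sum_(b < s + s) \sum_(c < s + s) \sum_(d < s + s)
    x 0 a * y 0 b * z 0 c * w 0 d * Bcomp R a b c d.

Definition Tspan (R : realType) (s : nat) : {vspace 'rV[R]_(s + s)} :=
  <<[seq Tbas R l | l <- enum 'I_s]>>%VS.

Definition splits_tensor (R : realType) (s : nat)
    (W1 W2 : {vspace 'rV[R]_(s + s)}) : Prop :=
  forall x : 'I_4 -> 'rV[R]_(s + s),
    (exists i j : 'I_4, i != j /\ x i \in W1 /\ x j \in W2) ->
    B2s (x (@inord 3 0)) (x (@inord 3 1)) (x (@inord 3 2)) (x (@inord 3 3)) = 0.

Definition irreducible_B (R : realType) (s : nat) : Prop :=
  ~ exists W1 W2 : {vspace 'rV[R]_(s + s)},
      [/\ (W1 + W2 = fullv)%VS, (W1 :&: W2 = 0)%VS,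
          W1 != 0%VS, W2 != 0%VS & splits_tensor W1 W2].

From HB Require Import structures.
From mathcomp Require Import all_boot all_order all_algebra.
From mathcomp Require Import reals ring.
Import Order.TTheory GRing.Theory Num.Theory.
Local Open Scope ring_scope.

(* Write x = (x_U, x_T) for the U- and T-coordinates of x.  The vanishing of
   B(xi1, U_m, T_n, xi2) says that the rank-one matrix ((xi1_U)_n (xi2_U)_m)
   is a scalar multiple of the identity; as s >= 2 it must be zero, so one of
   the U-parts vanishes.  Then B(xi1, U_m, U_n, xi2) = 0 gives the same
   relation between that vector's T-part (nonzero) and the other vector's
   U-part, which therefore vanishes as well.  For irreducibility, nonzero
   vectors of W1 and W2 form such pairs, so W1 + W2 lies in Span{T_l}, which
   misses U_1. *)

Lemma split_lshift m n (i : 'I_m) : split (lshift n i) = inl i.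
Proof. exact: (unsplitK (inl i)). Qed.

Lemma split_rshift m n (i : 'I_n) : split (rshift m i) = inr i.
Proof. exact: (unsplitK (inr i)). Qed.

Lemma outer_scalar_delta_eq0 {R : idomainType} {s : nat} (p q : 'rV[R]_s) c :
  (1 < s)%N -> (forall m n, p 0 n * q 0 m = c * (m == n)%:R) -> p = 0 \/ q = 0.
Proof.
move=> s_gt1 pq.
have c0 : c = 0.
  pose i : 'I_s := Ordinal (ltnW s_gt1); pose j : 'I_s := Ordinal s_gt1.
  have cc : c * c = (p 0 i * q 0 j) * (p 0 j * q 0 i).
    by have := congr2 *%R (pq i i) (pq j j); rewrite !eqxx !mulr1 => <-; ring.
  by apply/eqP; rewrite -[c == 0]orbb -mulf_eq0 cc !pq /= !mulr0.
have [n pn | p0] := pickP (fun n => p 0 n != 0); [right | left].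
  apply/rowP => m; apply/eqP; rewrite mxE.
  by have /eqP := pq m n; rewrite c0 mul0r mulf_eq0 (negbTE pn).
by apply/rowP => n; apply/eqP; rewrite mxE; exact: negbFE (p0 n).
Qed.

Lemma rsubmx_neq0 {V : nmodType} {m n1 n2} (A : 'M[V]_(m, n1 + n2)) :
  A != 0 -> lsubmx A = 0 -> rsubmx A != 0.
Proof.
by move=> + AU; apply: contraNneq => AT; rewrite -(hsubmxK A) AU AT row_mx0.
Qed.

Section CurvatureTensor.
Variables (R : realType) (s : nat).

Definition dotr (p q : 'rV[R]_s) : R := \sum_i p 0 i * q 0 i.

Lemma dot0r (q : 'rV[R]_s) : dotr 0 q = 0.
Proof. by rewrite /dotr big1 // => i _; rewrite mxE mul0r. Qed.

Lemma sum_mul_delta (F : 'I_s -> R) j : \sum_i F i * (i == j)%:R = F j.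
Proof.
rewrite (bigD1 j) //= eqxx mulr1 big1 ?addr0 // => i /negbTE ->.
by rewrite mulr0.
Qed.

Lemma Bfun_sum13 (p q : 'rV[R]_s) m n :
  \sum_i \sum_k p 0 i * q 0 k * Bfun R i m k n
  = p 0 n * q 0 m - dotr p q * (m == n)%:R.
Proof.
transitivity (\sum_i (p 0 i * (i == n)%:R * q 0 m
                      - (m == n)%:R * (p 0 i * q 0 i))).
  apply: eq_bigr => i _.
  transitivity (\sum_k (p 0 i * (i == n)%:R * (q 0 k * (k == m)%:R)
                        - (m == n)%:R * p 0 i * (q 0 k * (k == i)%:R))).
    by apply: eq_bigr => k _; rewrite /Bfun (eq_sym m k) (eq_sym i k); ring.
  by rewrite sumrB -!mulr_sumr !sum_mul_delta !mulrA.
by rewrite sumrB -mulr_suml sum_mul_delta -mulr_sumr [_ * dotr _ _]mulrC.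
Qed.

Lemma Bfun_antisym34 (i j k l : 'I_s) : Bfun R i j l k = - Bfun R i j k l.
Proof. by rewrite /Bfun opprB. Qed.

Lemma Bfun_swap12_34 (i j k l : 'I_s) : Bfun R j i l k = Bfun R i j k l.
Proof. by rewrite /Bfun (mulrC (j == k)%:R) (mulrC (j == l)%:R). Qed.

Lemma B2s_delta_mid x y b c :
  B2s x (delta_mx 0 b) (delta_mx 0 c) y
  = \sum_(a < s + s) \sum_(d < s + s) x 0 a * y 0 d * Bcomp R a b c d.
Proof.
apply: eq_bigr => a _.
rewrite (bigD1 b) //= [X in _ + X]big1 ?addr0; last first.
  move=> b' /negbTE b'b; apply: big1 => c' _; apply: big1 => d _.
  by rewrite !mxE b'b andbF !(mulr0, mul0r).
rewrite (bigD1 c) //= [X in _ + X]big1 ?addr0; last first.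
  move=> c' /negbTE c'c; apply: big1 => d _.
  by rewrite !mxE c'c andbF !(mulr0, mul0r).
by apply: eq_bigr => d _; rewrite !mxE !eqxx !mulr1.
Qed.

Lemma B2s_mid_UT x y m n :
  B2s x (Ubas R m) (Tbas R n) y
  = dotr (lsubmx x) (lsubmx y) * (m == n)%:R - lsubmx x 0 n * lsubmx y 0 m.
Proof.
rewrite B2s_delta_mid big_split_ord /= [X in _ + X]big1 ?addr0; last first.
  move=> l _; apply: big1 => d _.
  by rewrite /Bcomp !split_lshift !split_rshift; case: (split d); rewrite mulr0.
rewrite -opprB -Bfun_sum13 -sumrN; apply: eq_bigr => i _.
rewrite big_split_ord /= [X in _ + X]big1 ?addr0 => [|l _]; last first.
  by rewrite /Bcomp !split_lshift !split_rshift mulr0.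
rewrite -sumrN; apply: eq_bigr => k _.
by rewrite /Bcomp !split_lshift split_rshift !mxE mulrN.
Qed.

Lemma B2s_mid_UU x y m n :
  B2s x (Ubas R m) (Ubas R n) y
  = (dotr (lsubmx x) (rsubmx y) + dotr (lsubmx y) (rsubmx x)) * (m == n)%:R
    - (lsubmx x 0 n * rsubmx y 0 m + rsubmx x 0 n * lsubmx y 0 m).
Proof.
rewrite B2s_delta_mid big_split_ord /=.
have UT : \sum_i \sum_d x 0 (lshift s i) * y 0 d
              * Bcomp R (lshift s i) (lshift s m) (lshift s n) d
          = - (lsubmx x 0 n * rsubmx y 0 m
               - dotr (lsubmx x) (rsubmx y) * (m == n)%:R).
  rewrite -Bfun_sum13 -sumrN; apply: eq_bigr => i _.
  rewrite big_split_ord /= big1 ?add0r => [|k _]; last first.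
    by rewrite /Bcomp !split_lshift mulr0.
  rewrite -sumrN; apply: eq_bigr => l _.
  by rewrite /Bcomp !split_lshift split_rshift !mxE Bfun_antisym34 mulrN.
have TU : \sum_l \sum_d x 0 (rshift s l) * y 0 d
              * Bcomp R (rshift s l) (lshift s m) (lshift s n) d
          = - (lsubmx y 0 m * rsubmx x 0 n
               - dotr (lsubmx y) (rsubmx x) * (n == m)%:R).
  transitivity (\sum_l \sum_j x 0 (rshift s l) * y 0 (lshift s j)
                                * - Bfun R n j m l).
    apply: eq_bigr => l _.
    rewrite big_split_ord /= [X in _ + X]big1 ?addr0 => [|l' _]; last first.
      by rewrite /Bcomp !split_rshift !split_lshift mulr0.
    by apply: eq_bigr => j _; rewrite /Bcomp !split_rshift !split_lshift.
  rewrite exchange_big -Bfun_sum13 -sumrN; apply: eq_bigr => j _.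
  rewrite -sumrN; apply: eq_bigr => l _.
  by rewrite Bfun_swap12_34 !mxE mulrN [x 0 _ * _]mulrC.
by rewrite UT TU (eq_sym n m); ring.
Qed.

Lemma memv_Tspan x : (x \in Tspan R s) = (lsubmx x == 0).
Proof.
apply/idP/eqP => [x_T | xU].
  have Tspan_ker : (Tspan R s <= lker (linfun (@lsubmx R 1 s s)))%VS.
    apply/span_subvP => _ /mapP[l _ ->]; rewrite memv_ker lfunE /=.
    by apply/eqP/rowP => i; rewrite !mxE eq_lrshift andbF.
  by move/subvP/(_ x x_T): Tspan_ker; rewrite memv_ker lfunE => /eqP.
rewrite (row_sum_delta x) big_split_ord /= big1 ?add0r => [|i _]; last first.
  by have /rowP/(_ i) := xU; rewrite !mxE => ->; rewrite scale0r.
apply: rpred_sum => l _; apply/rpredZ/memv_span.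
by apply/mapP; exists l; rewrite ?mem_enum.
Qed.

Lemma Ubas_notin_Tspan i : Ubas R i \notin Tspan R s.
Proof.
by rewrite memv_Tspan; apply/eqP => /rowP/(_ i)/eqP; rewrite !mxE !eqxx oner_eq0.
Qed.

Lemma splits_tensor_B2s (W1 W2 : {vspace 'rV[R]_(s + s)}) x y e1 e2 :
  splits_tensor W1 W2 ->
  x \in W1 -> y \in W2 -> B2s x e1 e2 y = 0.
Proof.
move=> split12 xW1 yW2.
have := split12 (fun k : 'I_4 => nth 0 [:: x; e1; e2; y] k).
rewrite !inordK //; apply; exists (inord 0), (inord 3).
by rewrite -val_eqE /= !inordK.
Qed.

Hypothesis s_gt1 : (1 < s)%N.

Lemma B2s_null_pair_Tspan x y : x != 0 -> y != 0 ->
    (forall e1 e2, B2s x e1 e2 y = 0) -> x \in Tspan R s /\ y \in Tspan R s.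
Proof.
move=> x_nz y_nz B0; rewrite !memv_Tspan.
have [xU | yU] : lsubmx x = 0 \/ lsubmx y = 0.
  apply: (outer_scalar_delta_eq0 _ _ (dotr (lsubmx x) (lsubmx y))) => // m n.
  by have /eqP := B0 (Ubas R m) (Tbas R n); rewrite B2s_mid_UT subr_eq0 => /eqP.
- have [m n | xT | yU] := outer_scalar_delta_eq0
      (rsubmx x) (lsubmx y) (dotr (lsubmx y) (rsubmx x)) s_gt1.
  + have /eqP := B0 (Ubas R m) (Ubas R n).
    by rewrite B2s_mid_UU xU dot0r add0r !mxE mul0r add0r subr_eq0 => /eqP.
  + by have := rsubmx_neq0 _ x_nz xU; rewrite xT eqxx.
  + by rewrite xU yU.
- have [m n | xU | yT] := outer_scalar_delta_eq0
      (lsubmx x) (rsubmx y) (dotr (lsubmx x) (rsubmx y)) s_gt1.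
  + have /eqP := B0 (Ubas R m) (Ubas R n).
    by rewrite B2s_mid_UU yU dot0r addr0 !mxE mulr0 addr0 subr_eq0 => /eqP.
  + by rewrite xU yU.
  + by have := rsubmx_neq0 _ y_nz yU; rewrite yT eqxx.
Qed.

Lemma irreducible_B2s : irreducible_B R s.
Proof.
move=> [W1 [W2 [W12_full _ W1_nz W2_nz split12]]].
have null_pair x y : x \in W1 -> y \in W2 -> x != 0 -> y != 0 ->
    x \in Tspan R s /\ y \in Tspan R s.
  move=> xW1 yW2 x_nz y_nz; apply: B2s_null_pair_Tspan x_nz y_nz _ => e1 e2.
  exact: splits_tensor_B2s split12 xW1 yW2.
have pick1 : vpick W1 != 0 by rewrite vpick0.
have pick2 : vpick W2 != 0 by rewrite vpick0.
have W12_Tspan : (W1 + W2 <= Tspan R s)%VS.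
  rewrite subv_add; apply/andP; split; apply/subvP => z zW;
    have [-> | z_nz] := eqVneq z 0; try exact: mem0v.
  - exact: (null_pair z (vpick W2) zW (memv_pick W2) z_nz pick2).1.
  - exact: (null_pair (vpick W1) z (memv_pick W1) zW pick1 z_nz).2.
have := Ubas_notin_Tspan (Ordinal (ltnW s_gt1)).
by rewrite (subvP W12_Tspan) // W12_full memvf.
Qed.

End CurvatureTensor.

Theorem lemma4p2 (R : realType) (s : nat) (hs : (2 <= s)%N) :
  (forall xi1 xi2 : 'rV[R]_(s + s),
     xi1 != 0 -> xi2 != 0 ->
     (forall eta1 eta2 : 'rV[R]_(s + s),
        B2s xi1 xi2 eta1 eta2 = 0 /\ B2s xi1 eta1 eta2 xi2 = 0) ->
     xi1 \in Tspan R s /\ xi2 \in Tspan R s)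
  /\ irreducible_B R s.
Proof.
split; last exact: irreducible_B2s.
move=> xi1 xi2 xi1_nz xi2_nz B0.
by apply: B2s_null_pair_Tspan => // eta1 eta2; case: (B0 eta1 eta2).
Qed.
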